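(* $(M_0,\mathrm{id})$ with the path metric is an initial object in $\mathsf{SquaMS}$.
   Context: Let $M_0=\{(r,s)\in[0,1]^2: r\in\{0,1\}\text{ or } s\in\{0,1\}\}$ be the boundary of the unit square. Its path metric: two points on the same side have distance equal to their distance in $[0,1]$; points on adjacent sides sharing a corner $c$ have distance $d(x,c)+d(c,y)$; points on opposite sides have distance $\min(d(x,c_1)+1+d(c_2,y))$ over the two remaining sides with endpoints $c_1$ on the side of $x$ and $c_2$ on the side of $y$. A square metric space is a pair $(X,S_X)$ with $X$ a metric space with all distances at most $2$ and $S_X\colon M_0\to X$ injective such that (sq1) for $i\in\{0,1\}$, $r,s\in[0,1]$: $d_X(S_X(i,r),S_X(i,s))=|s-r|$ and $d_X(S_X(r,i),S_X(s,i))=|s-r|$; (sq2) $d_X(S_X(r,s),S_X(t,u))\ge|r-t|+|s-u|$. $\mathsf{SquaMS}$ has these as objects and short maps $f\colon X\to Y$ with $f\circ S_X=S_Y$ as morphisms. *)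

From Stdlib Require Import Reals Bool.
Open Scope R_scope.

Definition inM0 (p : R * R) : Prop :=
  0 <= fst p <= 1 /\ 0 <= snd p <= 1 /\
  (fst p = 0 \/ fst p = 1 \/ snd p = 0 \/ snd p = 1).

Definition M0 : Type := { p : R * R | inM0 p }.

Definition Reqb (a b : R) : bool := if Req_EM_T a b then true else false.

(** Path metric on the boundary of the square, following the case
    description: opposite vertical sides (r=0 / r=1), opposite horizontal
    sides (s=0 / s=1): minimum over the two routes through the remaining
    sides; otherwise (same or adjacent sides) the distance through the
    common side / common corner, which is |r-t|+|s-u|. *)
Definition pathd (x y : R * R) : R :=
  let r := fst x in let s := snd x in let t := fst y in let u := snd y in
  if (Reqb r 0 && Reqb t 1) then Rmin (s + 1 + u) ((1 - s) + 1 + (1 - u))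
  else if (Reqb r 1 && Reqb t 0) then Rmin (s + 1 + u) ((1 - s) + 1 + (1 - u))
  else if (Reqb s 0 && Reqb u 1) then Rmin (r + 1 + t) ((1 - r) + 1 + (1 - t))
  else if (Reqb s 1 && Reqb u 0) then Rmin (r + 1 + t) ((1 - r) + 1 + (1 - t))
  else Rabs (r - t) + Rabs (s - u).

Definition M0dist (p q : M0) : R := pathd (proj1_sig p) (proj1_sig q).

Definition is_metric {T : Type} (d : T -> T -> R) : Prop :=
  (forall x y, d x y = 0 <-> x = y) /\
  (forall x y, d x y = d y x) /\
  (forall x y z, d x z <= d x y + d y z).

Definition is_square_metric {T : Type} (d : T -> T -> R) (S : M0 -> T) : Prop :=
  is_metric d /\
  (forall x y, d x y <= 2) /\
  (forall p q, S p = S q -> p = q) /\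
  (forall p q : M0, fst (proj1_sig p) = fst (proj1_sig q) ->
     (fst (proj1_sig p) = 0 \/ fst (proj1_sig p) = 1) ->
     d (S p) (S q) = Rabs (snd (proj1_sig q) - snd (proj1_sig p))) /\
  (forall p q : M0, snd (proj1_sig p) = snd (proj1_sig q) ->
     (snd (proj1_sig p) = 0 \/ snd (proj1_sig p) = 1) ->
     d (S p) (S q) = Rabs (fst (proj1_sig q) - fst (proj1_sig p))) /\
  (forall p q : M0,
     d (S p) (S q) >= Rabs (fst (proj1_sig p) - fst (proj1_sig q))
                      + Rabs (snd (proj1_sig p) - snd (proj1_sig q))).

Record SquaMS := {
  sq_carrier :> Type;
  sq_dist : sq_carrier -> sq_carrier -> R;
  sq_S : M0 -> sq_carrier;
  sq_ax : is_square_metric sq_dist sq_S }.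

Definition short {T U : Type} (dT : T -> T -> R) (dU : U -> U -> R) (f : T -> U) : Prop :=
  forall x y, dU (f x) (f y) <= dT x y.

Definition SquaMS_hom {T : Type} (dT : T -> T -> R) (ST : M0 -> T) (Y : SquaMS)
  (f : T -> Y) : Prop :=
  short dT (sq_dist Y) f /\ (forall p, f (ST p) = sq_S Y p).

(* Parametrize the boundary by arc length θ ∈ [0,4], starting at the corner
   (0,0) and running counterclockwise.  The path metric is the distance
   min(|Δθ|, 4 - |Δθ|) on a circle of length 4, which gives the metric axioms.
   In a square metric space Y, (sq1) says that S_Y is an isometry in θ on each
   side; gluing at the corners makes S_Y 1-Lipschitz in θ along the whole loop,
   and since the loop closes up at (0,0) also with respect to 4 - |Δθ|.  Hence
   S_Y is short, and it is the only morphism since f = f ∘ id = S_Y. *)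

From Stdlib Require Import Reals Lra FunctionalExtensionality ProofIrrelevance.
Open Scope R_scope.

Ltac split_real_cases :=
  unfold Reqb, Rmin, Rmax, Rabs in *;
  repeat match goal with
  | |- context [Req_EM_T ?a ?b] =>
      destruct (Req_EM_T a b); simpl in *; try (exfalso; solve [lra | congruence])
  end;
  repeat match goal with
  | |- context [Rcase_abs ?a] => destruct (Rcase_abs a); try (exfalso; lra)
  end;
  repeat match goal with |- context [Rle_dec ?a ?b] => destruct (Rle_dec a b) end;
  simpl in *; intros; lra.

Ltac destruct_inM0 H :=
  let Hr := fresh "Hr" in let Hs := fresh "Hs" in
  unfold inM0 in H; simpl in H;
  destruct H as [Hr [Hs [-> | [-> | [-> | ->]]]]].

Definition loop_dist (L a b : R) : R := Rmin (Rabs (a - b)) (L - Rabs (a - b)).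

Lemma loop_dist_self L a : 0 <= L -> loop_dist L a a = 0.
Proof. intros; unfold loop_dist; split_real_cases. Qed.

Lemma loop_dist_sym L a b : loop_dist L a b = loop_dist L b a.
Proof. unfold loop_dist; now rewrite Rabs_minus_sym. Qed.

Lemma loop_dist_le_half L a b : loop_dist L a b <= L / 2.
Proof. unfold loop_dist; split_real_cases. Qed.

Lemma loop_dist_triangle L a b c :
  0 <= a <= L -> 0 <= b <= L -> 0 <= c <= L ->
  loop_dist L a c <= loop_dist L a b + loop_dist L b c.
Proof. intros; unfold loop_dist; split_real_cases. Qed.

Definition arc_coord (p : R * R) : R :=
  if Reqb (snd p) 0 then fst p else if Reqb (fst p) 1 then 1 + snd p
  else if Reqb (snd p) 1 then 3 - fst p else 4 - snd p.

Lemma arc_coord_range p : inM0 p -> 0 <= arc_coord p <= 4.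
Proof.
  destruct p as [r s]; intros [Hr [Hs _]]; unfold arc_coord; split_real_cases.
Qed.

Lemma pathd_loop_dist p q : inM0 p -> inM0 q ->
  pathd p q = loop_dist 4 (arc_coord p) (arc_coord q).
Proof.
  destruct p as [r s], q as [t u]; intros Hp Hq.
  destruct_inM0 Hp; destruct_inM0 Hq;
    unfold pathd, loop_dist, arc_coord; split_real_cases.
Qed.

Lemma pathd_ge_taxicab p q : inM0 p -> inM0 q ->
  Rabs (fst p - fst q) + Rabs (snd p - snd q) <= pathd p q.
Proof.
  destruct p as [r s], q as [t u]; intros Hp Hq.
  destruct_inM0 Hp; destruct_inM0 Hq; unfold pathd; split_real_cases.
Qed.

Lemma pathd_vertical_side p q : inM0 p -> inM0 q -> fst p = fst q ->
  (fst p = 0 \/ fst p = 1) -> pathd p q = Rabs (snd q - snd p).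
Proof.
  destruct p as [r s], q as [t u]; intros [_ [Hs _]] [_ [Hu _]]; simpl.
  intros <- [-> | ->]; unfold pathd; split_real_cases.
Qed.

Lemma pathd_horizontal_side p q : inM0 p -> inM0 q -> snd p = snd q ->
  (snd p = 0 \/ snd p = 1) -> pathd p q = Rabs (fst q - fst p).
Proof.
  destruct p as [r s], q as [t u]; intros [Hr _] [Ht _]; simpl.
  intros <- [-> | ->]; unfold pathd; split_real_cases.
Qed.

Lemma M0_eq (p q : M0) : proj1_sig p = proj1_sig q -> p = q.
Proof. destruct p, q; simpl; apply subset_eq_compat. Qed.

Lemma M0dist_eq0 (p q : M0) : M0dist p q = 0 -> p = q.
Proof.
  destruct p as [[r s] Hp], q as [[t u] Hq]; unfold M0dist; simpl; intros H0.
  pose proof (pathd_ge_taxicab _ _ Hp Hq) as Hle; simpl in Hle.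
  apply M0_eq; simpl; f_equal; revert Hle; split_real_cases.
Qed.

Lemma M0_square_metric : is_square_metric M0dist (fun p : M0 => p).
Proof.
  unfold M0dist; repeat split.
  - apply M0dist_eq0.
  - intros <-; destruct x as [p Hp]; simpl.
    rewrite pathd_loop_dist by assumption; apply loop_dist_self; lra.
  - intros [p Hp] [q Hq]; simpl.
    rewrite !pathd_loop_dist by assumption; apply loop_dist_sym.
  - intros [p Hp] [q Hq] [v Hv]; simpl.
    rewrite !pathd_loop_dist by assumption.
    apply loop_dist_triangle; apply arc_coord_range; assumption.
  - intros [p Hp] [q Hq]; simpl.
    rewrite pathd_loop_dist by assumption.
    pose proof (loop_dist_le_half 4 (arc_coord p) (arc_coord q)); lra.
  - trivial.
  - intros [p Hp] [q Hq]; apply pathd_vertical_side; assumption.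
  - intros [p Hp] [q Hq]; apply pathd_horizontal_side; assumption.
  - intros [p Hp] [q Hq]; apply Rle_ge, pathd_ge_taxicab; assumption.
Qed.

(* Outside [0,4] the point is clamped, so that [arc_point] is total. *)
Definition arc_pair (t : R) : R * R :=
  if Rle_dec t 1 then (Rmax 0 t, 0) else if Rle_dec t 2 then (1, t - 1)
  else if Rle_dec t 3 then (3 - t, 1) else (0, Rmax 0 (4 - t)).

Lemma arc_pair_inM0 t : inM0 (arc_pair t).
Proof.
  unfold arc_pair, inM0, Rmax.
  repeat match goal with |- context [Rle_dec ?a ?b] => destruct (Rle_dec a b) end;
    simpl; split; try split; try lra; tauto.
Qed.

Definition arc_point (t : R) : M0 := exist inM0 (arc_pair t) (arc_pair_inM0 t).

Lemma arc_point_coord (p : M0) : arc_point (arc_coord (proj1_sig p)) = p.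
Proof.
  apply M0_eq; destruct p as [[r s] Hp]; simpl.
  destruct_inM0 Hp; unfold arc_pair, arc_coord;
    apply injective_projections; simpl; split_real_cases.
Qed.

Lemma arc_point_closed : arc_point 0 = arc_point 4.
Proof.
  apply M0_eq; simpl; unfold arc_pair.
  apply injective_projections; simpl; split_real_cases.
Qed.

Lemma arc_pair_sides s :
  (0 <= s <= 1 -> arc_pair s = (s, 0)) /\ (1 <= s <= 2 -> arc_pair s = (1, s - 1)) /\
  (2 <= s <= 3 -> arc_pair s = (3 - s, 1)) /\ (3 <= s <= 4 -> arc_pair s = (0, 4 - s)).
Proof.
  unfold arc_pair; repeat split; intros;
    apply injective_projections; simpl; split_real_cases.
Qed.

Definition lipschitz1_on {Y : Type} (d : Y -> Y -> R) (h : R -> Y) (a b : R) : Prop :=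
  forall s t, a <= s <= b -> a <= t <= b -> d (h s) (h t) <= Rabs (s - t).

Section Lipschitz_paths.

Variables (Y : Type) (d : Y -> Y -> R).
Hypothesis d_triangle : forall x y z, d x z <= d x y + d y z.

Lemma lipschitz1_on_glue h a m b :
  lipschitz1_on d h a m -> lipschitz1_on d h m b -> lipschitz1_on d h a b.
Proof.
  intros Ham Hmb s t Hs Ht.
  destruct (Rle_dec s m), (Rle_dec t m).
  - apply Ham; lra.
  - pose proof (Ham s m ltac:(lra) ltac:(lra)) as Hsm.
    pose proof (Hmb m t ltac:(lra) ltac:(lra)) as Hmt.
    pose proof (d_triangle (h s) (h m) (h t)); revert Hsm Hmt; split_real_cases.
  - pose proof (Hmb s m ltac:(lra) ltac:(lra)) as Hsm.
    pose proof (Ham m t ltac:(lra) ltac:(lra)) as Hmt.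
    pose proof (d_triangle (h s) (h m) (h t)); revert Hsm Hmt; split_real_cases.
  - apply Hmb; lra.
Qed.

(* Going round the other way, through [h 0 = h L], bounds [d (h s) (h t)]
   by the length of the complementary arc. *)
Lemma lipschitz1_on_loop_dist h L s t :
  lipschitz1_on d h 0 L -> h 0 = h L -> 0 <= s <= L -> 0 <= t <= L ->
  d (h s) (h t) <= loop_dist L s t.
Proof.
  intros Hlip Hloop Hs Ht; apply Rmin_glb; [now apply Hlip|].
  destruct (Rle_dec s t).
  - pose proof (Hlip s 0 Hs ltac:(lra)) as Hs0.
    pose proof (Hlip L t ltac:(lra) Ht) as HLt.
    pose proof (d_triangle (h s) (h 0) (h t)); rewrite Hloop in *.
    revert Hs0 HLt; split_real_cases.
  - pose proof (Hlip s L Hs ltac:(lra)) as HsL.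
    pose proof (Hlip 0 t ltac:(lra) Ht) as H0t.
    pose proof (d_triangle (h s) (h L) (h t)); rewrite <- Hloop in *.
    revert HsL H0t; split_real_cases.
Qed.

End Lipschitz_paths.

Section Square_metric_space.

Variables (T : Type) (d : T -> T -> R) (S : M0 -> T).
Hypothesis S_square : is_square_metric d S.

Lemma S_arc_lipschitz_on_sides :
  lipschitz1_on d (fun t => S (arc_point t)) 0 1 /\
  lipschitz1_on d (fun t => S (arc_point t)) 1 2 /\
  lipschitz1_on d (fun t => S (arc_point t)) 2 3 /\
  lipschitz1_on d (fun t => S (arc_point t)) 3 4.
Proof.
  destruct S_square as (_ & _ & _ & vertical & horizontal & _).
  repeat split; intros s t Hs Ht; apply Req_le;
    destruct (arc_pair_sides s) as (s0 & s1 & s2 & s3);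
    destruct (arc_pair_sides t) as (t0 & t1 & t2 & t3).
  - rewrite horizontal; simpl; rewrite ?s0, ?t0 by lra; simpl; split_real_cases.
  - rewrite vertical; simpl; rewrite ?s1, ?t1 by lra; simpl; split_real_cases.
  - rewrite horizontal; simpl; rewrite ?s2, ?t2 by lra; simpl; split_real_cases.
  - rewrite vertical; simpl; rewrite ?s3, ?t3 by lra; simpl; split_real_cases.
Qed.

Lemma S_short : short M0dist d S.
Proof.
  destruct S_square as ((_ & _ & d_triangle) & _).
  destruct S_arc_lipschitz_on_sides as (H01 & H12 & H23 & H34).
  intros p q; rewrite <- (arc_point_coord p), <- (arc_point_coord q) at 1.
  unfold M0dist; rewrite pathd_loop_dist by apply proj2_sig.
  apply (lipschitz1_on_loop_dist _ _ d_triangle (fun t => S (arc_point t)));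
    try (apply arc_coord_range, proj2_sig).
  - apply (lipschitz1_on_glue _ _ d_triangle _ _ 3); [|exact H34].
    apply (lipschitz1_on_glue _ _ d_triangle _ _ 2); [|exact H23].
    exact (lipschitz1_on_glue _ _ d_triangle _ _ 1 _ H01 H12).
  - simpl; f_equal; exact arc_point_closed.
Qed.

End Square_metric_space.

Theorem mainTheorem18 :
  is_square_metric M0dist (fun p : M0 => p) /\
  forall Y : SquaMS,
    exists! f : M0 -> Y, SquaMS_hom M0dist (fun p : M0 => p) Y f.
Proof.
  split; [exact M0_square_metric|].
  intro Y; exists (sq_S Y); split.
  - split; [exact (S_short _ _ _ (sq_ax Y)) | reflexivity].
  - intros f [_ f_S]; apply functional_extensionality; intro p.
    symmetry; apply f_S.
Qed.
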